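(* For every composite number $a\in\mathbb N$, there exist at least two distinct integer bases $b,c\ge 2$ such that $a$ is antipalindromic both in base $b$ and in base $c$.
   Context: For an integer $b\ge 2$, every natural number $x$ has a unique base-$b$ expansion $x=a_\ell b^\ell+\dots+a_1b+a_0$ with $a_0,\dots,a_\ell\in\{0,1,\dots,b-1\}$ and $a_\ell\neq 0$. The number $x$ is antipalindromic in base $b$ if $a_j=b-1-a_{\ell-j}$ for all $j\in\{0,1,\dots,\ell\}$. *)

From mathcomp Require Import all_boot.
Set Implicit Arguments. Unset Strict Implicit. Unset Printing Implicit Defensive.

Definition digit (b x j : nat) : nat := (x %/ b ^ j) %% b.

(* x is antipalindromic in base b: x has base-b expansion
   a_l b^l + ... + a_0 with a_l <> 0 (i.e. b^l <= x < b^(l+1)),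
   and a_j = b - 1 - a_(l-j) for all j in {0,...,l}. *)
Definition antipalindromic (b x : nat) : Prop :=
  exists l : nat,
    [/\ b ^ l <= x, x < b ^ l.+1 &
        forall j, j <= l -> digit b x j = b - 1 - digit b x (l - j)].

From mathcomp Require Import all_boot.
From mathcomp Require Import zify.

(* Write a = m n with 2 <= m <= n.  In base 2a + 1 the number a is the single
   digit a = (2a + 1) - 1 - a, and in base n + 1 it has the two digits
   m - 1 and n + 1 - m, which add up to n.  Since n + 1 <= a < 2a + 1, these
   bases differ. *)

Lemma antipalindromic_single_digit x : 0 < x -> antipalindromic x.*2.+1 x.
Proof.
move=> x_gt0; exists 0; split; rewrite ?expn0 ?expn1 //; first lia.
by move=> j; rewrite leqn0 => /eqP ->; rewrite /digit expn0 divn1 modn_small; lia.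
Qed.

Lemma antipalindromic_two_digits b h l :
  0 < h -> h + l = b.-1 -> antipalindromic b (h * b + l).
Proof.
move=> h_gt0 sum_hl.
have l_lt_b : l < b by lia.
have h_lt_b : h < b by lia.
have digit0 : digit b (h * b + l) 0 = l by rewrite /digit divn1 modnMDl modn_small.
have digit1 : digit b (h * b + l) 1 = h.
  by rewrite /digit expn1 divnMDl ?(divn_small l_lt_b) ?addn0 ?modn_small //; lia.
exists 1; split; rewrite ?expn1 ?expnS ?expn1; [nia | nia |].
by case=> [|[|j]] // _; rewrite ?subn0 ?subnn digit0 digit1; lia.
Qed.

Lemma antipalindromic_mul m n : 2 <= m <= n -> antipalindromic n.+1 (m * n).
Proof.
move=> /andP[m_ge2 m_le_n].
have -> : m * n = (m - 1) * n.+1 + (n.+1 - m) by nia.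
by apply: antipalindromic_two_digits; lia.
Qed.

Lemma composite_ordered_factors a :
  1 < a -> ~~ prime a -> exists m n, [/\ 2 <= m <= n & a = m * n].
Proof.
move=> a_gt1 /primePn[|[d /andP[d_gt1 d_lt_a] d_dvd_a]]; first lia.
have def_a : a = d * (a %/ d) by rewrite mulnC divnK.
have q_gt1 : 1 < a %/ d by move: def_a; set q := a %/ d; nia.
case: (leqP d (a %/ d)) => [d_le_q | q_lt_d].
- by exists d, (a %/ d); rewrite d_gt1 d_le_q.
- by exists (a %/ d), d; rewrite q_gt1 ltnW // mulnC.
Qed.

Theorem mainTheorem13 (a : nat) :
  1 < a -> ~~ prime a ->
  exists b c : nat,
    [/\ 2 <= b, 2 <= c, b != c, antipalindromic b a & antipalindromic c a].
Proof.
move=> a_gt1 a_composite.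
have [m [n [m_bounds def_a]]] := composite_ordered_factors a a_gt1 a_composite.
have n_lt_a : n < a by case/andP: m_bounds; nia.
exists n.+1, a.*2.+1; split; [lia | lia | lia | |].
- by rewrite def_a; apply: antipalindromic_mul.
- by apply: antipalindromic_single_digit; lia.
Qed.
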